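(* For every positive integer $\ell$, there exists a tree $T$ such that $\gamma_t(T)-\chi_{\mu_2}(T)=\ell$.
   Context: $\gamma_t(T)$ is the total domination number: the minimum size of a set $D$ such that every vertex has a neighbor in $D$. A set $M\subseteq V(G)$ is a $2$-distance mutual-visibility set if for every two vertices $u,v\in M$ there exists a shortest $u,v$-path of length at most $2$ none of whose internal vertices lies in $M$. $\chi_{\mu_2}(G)$ is the minimum cardinality of a partition of $V(G)$ into $2$-distance mutual-visibility sets. *)

From mathcomp Require Import all_boot.
Set Implicit Arguments. Unset Strict Implicit. Unset Printing Implicit Defensive.

Section Graphs.
Variable T : finType.
Variable e : rel T.

Definition simple_graph : Prop := symmetric e /\ irreflexive e.

Definition acyclic : Prop := forall c : seq T, 3 <= size c -> ~ ucycle e c.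

Definition is_tree : Prop :=
  [/\ simple_graph, 0 < #|T|, (forall x y : T, connect e x y) & acyclic].

Definition total_dominating (D : {set T}) : Prop :=
  forall v : T, exists2 u, u \in D & e v u.

Definition is_total_domination_number (k : nat) : Prop :=
  (exists2 D : {set T}, total_dominating D & #|D| = k) /\
  (forall D : {set T}, total_dominating D -> k <= #|D|).

(* 2-distance mutual-visibility set: any two distinct vertices of M are at
   distance 1, or at distance 2 via a middle vertex outside M (a shortest
   path of length <= 2 with no internal vertex in M). *)
Definition mv2_set (M : {set T}) : Prop :=
  forall u v, u \in M -> v \in M -> u != v ->
    e u v \/ exists w, [/\ w \notin M, e u w & e w v].

Definition mv2_partition (P : {set {set T}}) : Prop :=
  partition P [set: T] /\ forall M, M \in P -> mv2_set M.

Definition is_chi_mu2 (k : nat) : Prop :=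
  (exists2 P : {set {set T}}, mv2_partition P & #|P| = k) /\
  (forall P : {set {set T}}, mv2_partition P -> k <= #|P|).
End Graphs.

From mathcomp Require Import all_boot zify.
Set Implicit Arguments. Unset Strict Implicit. Unset Printing Implicit Defensive.

(* The tree is the spider with k = l + 2 legs of length 3.  A total
   dominating set contains the neighbour of each leaf and one more vertex of
   each leg, and the two inner vertices of every leg suffice: gamma_t = 2k.
   In a 2-distance mutual-visibility partition the k leaves and the centre
   are pairwise at distance at least 3, hence in k + 1 distinct classes; on
   each leg one inner vertex avoids the class of its leaf, and two such
   vertices on different legs cannot both join the class of the centre, their
   only possible common neighbour.  So chi_mu2 >= k + 2, and a colouring
   pairing each leaf with its neighbour, the centre with one neighbour, and
   putting all other neighbours of the centre in one class attains it. *)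

Lemma leq_card_into (T I : finType) (D : {set T}) (f : I -> T) :
  injective f -> (forall i, f i \in D) -> #|I| <= #|D|.
Proof.
move=> f_inj fD; rewrite -cardsT -(card_imset _ f_inj).
by apply/subset_leq_card/subsetP => _ /imsetP[i _ ->].
Qed.

Section MutualVisibilityPartitions.
Variables (T : finType) (e : rel T).

Lemma mv2_partition_pblock_neq P u v :
    mv2_partition e P -> u != v -> ~~ e u v ->
    (forall w, e u w -> e w v -> w \in pblock P u) ->
  pblock P u != pblock P v.
Proof.
move=> [/and3P[/eqP covP tiP _] mvP] uv nuv uwv.
have uP : u \in cover P by rewrite covP inE.
rewrite eq_pblock //; apply/negP => vB.
have := mvP _ (pblock_mem uP) u v; rewrite mem_pblock uP => /(_ isT vB uv).
case=> [uv' | [w [/negP wB uw wv]]]; first by rewrite uv' in nuv.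
exact/wB/uwv.
Qed.

Lemma leq_card_partition P (I : finType) (f : I -> T) :
    partition P [set: T] -> (forall i j, i != j -> pblock P (f i) != pblock P (f j)) ->
  #|I| <= #|P|.
Proof.
case/and3P=> /eqP covP _ _ fP; apply: (@leq_card_into _ _ _ (fun i => pblock P (f i))).
  by move=> i j; apply: contra_eq (fP i j).
by move=> i; apply: pblock_mem; rewrite covP inE.
Qed.

Lemma mv2_partition_preim (I : finType) (f : T -> I) :
    (forall i, mv2_set e (f @^-1: [set i])) ->
  mv2_partition e (preim_partition f [set: T]).
Proof.
move=> fibreP; split; first exact: preim_partitionP.
move=> _ /imsetP[x _ ->]; have -> : [set y in [set: T] | f x == f y] = f @^-1: [set f x].
  by apply/setP => y; rewrite !inE eq_sym.
exact: fibreP.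
Qed.

Lemma card_preim_partition_le (I : finType) (f : T -> I) D :
  #|preim_partition f D| <= #|I|.
Proof.
rewrite -(cardsT I); apply: leq_trans (leq_imset_card (fun i => [set y in D | i == f y]) _).
by apply/subset_leq_card/subsetP => _ /imsetP[x _ ->]; apply: imset_f.
Qed.

End MutualVisibilityPartitions.

Section ParentTrees.
Variable par : nat -> nat.
Hypothesis par_lt : forall v, 0 < v -> par v < v.

Definition par_adj (u v : nat) := ((0 < u) && (par u == v)) || ((0 < v) && (par v == u)).

Definition par_graph n : rel 'I_n.+1 := fun u v => par_adj u v.

Lemma par_adj_sym : symmetric par_adj.
Proof. by move=> u v; rewrite /par_adj orbC. Qed.

Lemma par_adj_irr : irreflexive par_adj.
Proof. by move=> u; rewrite /par_adj orbb; apply/andP => -[/par_lt + /eqP]; lia. Qed.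

Lemma par_adj_gt u v : v < u -> par_adj u v -> par u = v.
Proof.
move=> vu /orP[/andP[_ /eqP //] | /andP[/par_lt + /eqP]]; lia.
Qed.

Lemma connect_par_graph0 n (x : 'I_n.+1) : connect (@par_graph n) x ord0.
Proof.
have [m] := ubnP x; elim: m x => // m IH x x_m.
have [x0 | x_pos] := posnP x; first by have -> : x = ord0 by apply: val_inj.
have par_x : par x < n.+1 by have := par_lt x_pos; have := ltn_ord x; lia.
apply: (connect_trans (y := inord (par x))).
  by apply: connect1; rewrite /par_graph /par_adj inordK // x_pos eqxx.
by apply: IH; rewrite inordK //; have := par_lt x_pos; lia.
Qed.

Lemma par_adj_lt_eq m y w : y < m -> w < m -> par_adj m y -> par_adj m w -> y = w.
Proof. by move=> ym wm /(par_adj_gt ym) <- /(par_adj_gt wm). Qed.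

Lemma acyclic_par_graph n : acyclic (@par_graph n).
Proof.
move=> c c_size /andP[c_cycle c_uniq].
have c_head : head ord0 c \in c by rewrite -nth0 mem_nth // (ltnW (ltnW c_size)).
have [m m_c m_max] := @arg_maxnP _ (head ord0 c) (mem c) val c_head.
have [i s c_rot] := rot_to m_c.
have /andP[] : cycle (@par_graph n) (m :: s) && uniq (m :: s).
  by rewrite -c_rot rot_cycle rot_uniq c_cycle.
have : 3 <= size (m :: s) by rewrite -c_rot size_rot.
have le_m j : j \in m :: s -> val j <= val m by rewrite -c_rot mem_rot; apply: m_max.
clear c_rot; case: s le_m => [|y [|z q]] // le_m _.
rewrite /= rcons_path => /and3P[m_y _ /andP[_ w_m]] /and3P[m_yzq y_zq _].
set w := last z q in w_m; have w_zq : w \in z :: q by apply: mem_last.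
have y_m : y < m.
  have : val y != val m by apply: contraNneq m_yzq => /val_inj <-; apply: mem_head.
  by rewrite ltn_neqAle => ->; rewrite le_m // !inE eqxx orbT.
have w_m' : w < m.
  have : val w != val m by apply: contraNneq m_yzq => /val_inj <-; rewrite inE w_zq orbT.
  by rewrite ltn_neqAle => ->; rewrite le_m // in_cons in_cons w_zq !orbT.
rewrite /par_graph par_adj_sym in w_m.
have /val_inj y_w := par_adj_lt_eq y_m w_m' m_y w_m.
by move: y_zq; rewrite y_w w_zq.
Qed.

Lemma par_graph_tree n : is_tree (@par_graph n).
Proof.
have sym_par : symmetric (@par_graph n) by move=> x y; apply: par_adj_sym.
split=> //.
- by split=> // x; apply: par_adj_irr.
- by rewrite card_ord.
- move=> x y; apply: connect_trans (connect_par_graph0 x) _.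
  by rewrite sym_connect_sym //; apply: connect_par_graph0.
- exact: acyclic_par_graph.
Qed.

End ParentTrees.

(* Vertex 0 is the centre; leg i is the path 3i+1, 3i+2, 3i+3 hanging from it. *)
Definition spider_par v := if v %% 3 == 1 then 0 else v.-1.

Notation spider_adj := (par_adj spider_par).

Ltac spider_arith := rewrite /par_adj /spider_par /=; repeat case: ifP; lia.

Lemma spider_par_lt v : 0 < v -> spider_par v < v.
Proof. rewrite /spider_par; case: ifP; lia. Qed.

Definition far u v :=
  [/\ u != v, ~~ spider_adj u v & forall w, spider_adj u w -> ~~ spider_adj w v].

Definition blocked u v t :=
  [/\ u != v, ~~ spider_adj u v & forall w, spider_adj u w -> spider_adj w v -> w = t].

Lemma spider_adj_leaf i w : spider_adj (3 * i + 3) w -> w = 3 * i + 2.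
Proof. spider_arith. Qed.

Lemma spider_adj_mid i w : spider_adj (3 * i + 2) w -> w = 3 * i + 1 \/ w = 3 * i + 3.
Proof. spider_arith. Qed.

Lemma far_leaves i j : i != j -> far (3 * i + 3) (3 * j + 3).
Proof. by move=> ij; split=> [|| w]; spider_arith. Qed.

Lemma far_center_leaf i : far 0 (3 * i + 3).
Proof. by split=> [|| w]; spider_arith. Qed.

Lemma far_inner_leaf i j d : i != j -> 0 < d <= 2 -> far (3 * i + d) (3 * j + 3).
Proof. by move=> ij d12; split=> [|| w]; spider_arith. Qed.

Lemma blocked_leaf_base i : blocked (3 * i + 3) (3 * i + 1) (3 * i + 2).
Proof. by split=> [|| w]; spider_arith. Qed.

Lemma blocked_inner i j d d' :
  i != j -> 0 < d <= 2 -> 0 < d' <= 2 -> blocked (3 * i + d) (3 * j + d') 0.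
Proof. by move=> ij d12 d'12; split=> [|| w]; spider_arith. Qed.

Lemma far_blocked u v t : far u v -> blocked u v t.
Proof. by case=> uv nuv uwv; split=> // w uw wv; have := uwv w uw; rewrite wv. Qed.

Lemma spider_dominating_nbr k v : 0 < k -> v <= 3 * k ->
  exists u, [/\ u <= 3 * k, u %% 3 != 0 & spider_adj v u].
Proof.
move=> k_pos v_le; have [-> | v_pos] := posnP v.
  by exists 1; split; spider_arith.
by case: (v %% 3 =P 1) => v3; [exists v.+1 | exists v.-1]; split; spider_arith.
Qed.

Definition spider_label k v := if v <= 1 then k.+1 else if v %% 3 == 1 then k else v.-1 %/ 3.

Lemma spider_label_lt k v : v <= 3 * k -> spider_label k v < k.+2.
Proof. rewrite /spider_label; repeat case: ifP; lia. Qed.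

Lemma spider_label_visible k u v : u <= 3 * k -> v <= 3 * k ->
    spider_label k u = spider_label k v -> u != v ->
  spider_adj u v || [&& spider_label k 0 != spider_label k u, spider_adj u 0 & spider_adj 0 v].
Proof. rewrite /spider_label; spider_arith. Qed.

Section Spider.
Variable k : nat.

Local Notation vertex := 'I_(3 * k).+1.

Definition spider : rel vertex := @par_graph spider_par (3 * k).

Definition center : vertex := ord0.

Definition leg (i : 'I_k) d : vertex := inord (3 * i + d).

Lemma val_leg i d : d <= 3 -> nat_of_ord (leg i d) = 3 * i + d.
Proof. by move=> d3; rewrite inordK //; have := ltn_ord i; lia. Qed.

Lemma spider_tree : is_tree spider.
Proof. exact: par_graph_tree spider_par_lt _. Qed.

Definition spider_td_set : {set vertex} := [set v : vertex | v %% 3 != 0].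

Lemma spider_td_set_dominating : 0 < k -> total_dominating spider spider_td_set.
Proof.
move=> k_pos v; have [u [u_le u3 vu]] := spider_dominating_nbr k_pos (ltn_ord v : v <= 3 * k).
by exists (inord u); rewrite ?inE /spider /par_graph inordK.
Qed.

Lemma card_spider_td_set : #|spider_td_set| <= 2 * k.
Proof.
pose g (p : 'I_k * bool) := leg p.1 p.2.+1.
have -> : 2 * k = #|[set: 'I_k * bool]| by rewrite cardsT card_prod card_ord card_bool mulnC.
apply: leq_trans (leq_imset_card g _); apply/subset_leq_card/subsetP => v; rewrite inE => v3.
have v_lt : v %/ 3 < k by have := ltn_ord v; lia.
apply/imsetP; exists (Ordinal v_lt, v %% 3 == 2) => //.
by apply: ord_inj; rewrite val_leg /=; lia.
Qed.

Lemma spider_td_mid D i : total_dominating spider D -> leg i 2 \in D.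
Proof.
move/(_ (leg i 3)) => [u uD]; rewrite /spider /par_graph val_leg // => /spider_adj_leaf u_val.
by have -> : leg i 2 = u by apply: ord_inj; rewrite val_leg.
Qed.

Lemma spider_td_base_or_leaf D i :
  total_dominating spider D -> (leg i 1 \in D) || (leg i 3 \in D).
Proof.
move/(_ (leg i 2)) => [u uD].
rewrite /spider /par_graph val_leg // => /spider_adj_mid [u_val | u_val].
  by apply/orP; left; have -> : leg i 1 = u by apply: ord_inj; rewrite val_leg.
by apply/orP; right; have -> : leg i 3 = u by apply: ord_inj; rewrite val_leg.
Qed.

Lemma spider_td_card_ge D : total_dominating spider D -> 2 * k <= #|D|.
Proof.
move=> D_td; pose d i := if leg i 1 \in D then 1 else 3.
have d13 i : (d i == 1) || (d i == 3) by rewrite /d; case: ifP.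
pose g (p : 'I_k * bool) := leg p.1 (if p.2 then 2 else d p.1).
have g_val p : nat_of_ord (g p) = 3 * p.1 + (if p.2 then 2 else d p.1).
  by rewrite val_leg //; case: p.2 (d13 p.1) => //= /orP[] /eqP ->.
have -> : 2 * k = #|{: 'I_k * bool}| by rewrite card_prod card_ord card_bool mulnC.
apply: (@leq_card_into _ _ _ g).
  move=> [i b] [j c] /(congr1 (@nat_of_ord _)); rewrite !g_val /=.
  move: (d13 i) (d13 j); case: b; case: c => /= di dj gij;
    first [exfalso; lia | congr pair; apply: ord_inj; lia].
move=> [i []]; rewrite /g /d /=; first exact: spider_td_mid.
by case: ifP => // /negbT D1; have := spider_td_base_or_leaf i D_td; rewrite (negbTE D1).
Qed.

Lemma spider_total_domination_number :
  0 < k -> is_total_domination_number spider (2 * k).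
Proof.
move=> k_pos; split; last exact: spider_td_card_ge.
have D_td := spider_td_set_dominating k_pos.
by exists spider_td_set => //; apply/eqP; rewrite eqn_leq card_spider_td_set spider_td_card_ge.
Qed.

Definition spider_coloring (v : vertex) : 'I_k.+2 := inord (spider_label k v).

Lemma spider_coloring_mv2 : mv2_partition spider (preim_partition spider_coloring [set: vertex]).
Proof.
apply: mv2_partition_preim => c u v; rewrite !inE => /eqP uc /eqP vc uv.
have col_val w : nat_of_ord (spider_coloring w) = spider_label k w.
  by rewrite inordK // spider_label_lt // -ltnS.
have uv_label : spider_label k u = spider_label k v by rewrite -!col_val uc vc.
have /orP[uv_adj | /and3P[c0 u0 v0]] := spider_label_visible (ltn_ord u) (ltn_ord v) uv_label uv.
  by left.
right; exists center; split=> //; rewrite !inE.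
by apply: contraTneq c0 => c_center; rewrite negbK -[0]/(nat_of_ord center) -!col_val c_center uc.
Qed.

Section Classes.
Variable P : {set {set vertex}}.
Hypothesis mvP : mv2_partition spider P.

Lemma spider_pblock_mem v : v \in pblock P v.
Proof. by case: mvP => /and3P[/eqP covP _ _] _; rewrite mem_pblock covP inE. Qed.

Lemma spider_pblock_neq (u v t : vertex) :
  t \in pblock P u -> blocked u v t -> pblock P u != pblock P v.
Proof.
move=> tB [uv nuv uwv]; apply: (mv2_partition_pblock_neq mvP) => // w uw wv.
by have -> : w = t by apply: ord_inj; apply: uwv.
Qed.

Lemma spider_pblock_neq_far (u v : vertex) : far u v -> pblock P u != pblock P v.
Proof. by move/(far_blocked u); apply: spider_pblock_neq (spider_pblock_mem u). Qed.

Lemma spider_leaf_pblock_neq i j : i != j -> pblock P (leg i 3) != pblock P (leg j 3).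
Proof. by move=> ij; apply: spider_pblock_neq_far; rewrite !val_leg //; apply: far_leaves. Qed.

Lemma spider_center_leaf_pblock_neq i : pblock P center != pblock P (leg i 3).
Proof. by apply: spider_pblock_neq_far; rewrite val_leg //; apply: far_center_leaf. Qed.

Lemma spider_inner_pblock i :
  exists2 d, 0 < d <= 2 & forall j, pblock P (leg i d) != pblock P (leg j 3).
Proof.
have other_leaf d j : 0 < d <= 2 -> i != j -> pblock P (leg i d) != pblock P (leg j 3).
  move=> d12 ij; apply: spider_pblock_neq_far.
  by rewrite !val_leg //; [apply: far_inner_leaf | lia].
have [mid_B | mid_B] := boolP (leg i 2 \in pblock P (leg i 3)); [exists 1 | exists 2] => // j.
all: have [<- | ij] := eqVneq i j; last exact: other_leaf.
  by rewrite eq_sym (spider_pblock_neq mid_B) // !val_leg //; apply: blocked_leaf_base.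
have [/eqP covP tiP _] := and3P mvP.1.
by rewrite eq_sym eq_pblock // covP inE.
Qed.

Lemma spider_extra_pblock : 1 < k ->
  exists2 z, pblock P z != pblock P center & forall j, pblock P z != pblock P (leg j 3).
Proof.
move=> k_gt1; pose i0 : 'I_k := Ordinal (ltnW k_gt1); pose i1 : 'I_k := Ordinal k_gt1.
have [d0 d0_12 d0_leaf] := spider_inner_pblock i0.
have [d1 d1_12 d1_leaf] := spider_inner_pblock i1.
have [y0_c | ?] := eqVneq (pblock P (leg i0 d0)) (pblock P center); last by exists (leg i0 d0).
have [y1_c | ?] := eqVneq (pblock P (leg i1 d1)) (pblock P center); last by exists (leg i1 d1).
suff : pblock P (leg i0 d0) != pblock P (leg i1 d1) by rewrite y0_c y1_c eqxx.
apply: (@spider_pblock_neq _ _ center); first by rewrite y0_c spider_pblock_mem.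
by rewrite !val_leg; [apply: blocked_inner | lia | lia].
Qed.

Lemma spider_chi_lb : 1 < k -> k.+2 <= #|P|.
Proof.
move=> /spider_extra_pblock[z z_center z_leaf].
pose f (o : option (option 'I_k)) :=
  if o is Some o' then (if o' is Some i then leg i 3 else center) else z.
apply: leq_trans (leq_card_partition mvP.1 (f := f) _); first by rewrite !card_option card_ord.
case=> [[i|]|] [[j|]|] //= ij.
- by apply: spider_leaf_pblock_neq; apply: contraNneq ij => ->.
- by rewrite eq_sym; apply: spider_center_leaf_pblock_neq.
- by rewrite eq_sym; apply: z_leaf.
- exact: spider_center_leaf_pblock_neq.
- by rewrite eq_sym.
Qed.

End Classes.

Lemma spider_chi_mu2 : 1 < k -> is_chi_mu2 spider k.+2.
Proof.
move=> k_gt1; split=> [|P mvP]; last exact: spider_chi_lb.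
exists (preim_partition spider_coloring [set: vertex]); first exact: spider_coloring_mv2.
apply/eqP; rewrite eqn_leq (spider_chi_lb spider_coloring_mv2 k_gt1) andbT.
by have := card_preim_partition_le spider_coloring [set: vertex]; rewrite card_ord.
Qed.

End Spider.

Theorem mainTheorem8 : forall l : nat, 0 < l ->
  exists (n : nat) (e : rel 'I_n),
    is_tree e /\
    exists g c : nat,
      [/\ is_total_domination_number e g, is_chi_mu2 e c & g = c + l].
Proof.
(* The same spider also works for l = 0. *)
move=> l _; exists (3 * l.+2).+1, (@spider l.+2); split; first exact: spider_tree.
exists (2 * l.+2), l.+4; split.
- exact: spider_total_domination_number.
- exact: spider_chi_mu2.
- lia.
Qed.
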